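(* Let $H \in \mathbb{R}^{r \times n}_+$ be an entrywise nonnegative matrix satisfying the NC-SSC, i.e., $e - e_i \in \operatorname{cone}(H)$ for all $i \in \{1,\dots,r\}$. Then every $x \in \mathbb{R}^r$ with $e^\top x = 1$ and $H^\top x \ge 0$ (entrywise) satisfies $2 - r \le x_i \le 1$ for all $i \in \{1,\dots,r\}$.
   Context: $e \in \mathbb{R}^r$ denotes the all-ones vector and $e_i$ the $i$-th standard unit vector of $\mathbb{R}^r$. For $H \in \mathbb{R}^{r\times n}$, $\operatorname{cone}(H) = \{ Hy : y \in \mathbb{R}^n, y \ge 0\}$. The NC-SSC for $H$ means $\operatorname{cone}(ee^\top - I) \subseteq \operatorname{cone}(H)$, equivalently $e - e_i \in \operatorname{cone}(H)$ for all $i$. *)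

From mathcomp Require Import all_boot all_order all_algebra.
Set Implicit Arguments. Unset Strict Implicit. Unset Printing Implicit Defensive.
Import Order.TTheory GRing.Theory Num.Theory.
Local Open Scope ring_scope.

Definition ones (R : nzRingType) (r : nat) : 'cV[R]_r := const_mx 1.
Definition unitv (R : nzRingType) (r : nat) (i : 'I_r) : 'cV[R]_r := delta_mx i 0.

Definition nonneg_mx (R : numDomainType) (m n : nat) (A : 'M[R]_(m, n)) : Prop :=
  forall i j, 0 <= A i j.

Definition in_cone (R : numDomainType) (r n : nat) (H : 'M[R]_(r, n)) (v : 'cV[R]_r) : Prop :=
  exists y : 'cV[R]_n, nonneg_mx y /\ H *m y = v.

Definition NC_SSC (R : numDomainType) (r n : nat) (H : 'M[R]_(r, n)) : Prop :=
  forall i : 'I_r, in_cone H (ones R r - unitv R i).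

From mathcomp Require Import all_boot all_order all_algebra.
Import Order.TTheory GRing.Theory Num.Theory.
Set Implicit Arguments. Unset Strict Implicit. Unset Printing Implicit Defensive.
Local Open Scope ring_scope.

(* Pairing the NC-SSC certificate e - e_i = H y (y >= 0) with x gives
   1 - x_i = y^T (H^T x) >= 0.  Then sum_k x_k = 1 with all x_k <= 1 forces
   x_i = 1 - sum_(k != i) x_k >= 1 - (r - 1). *)

Lemma trmx_ones_mulmxE (R : nzRingType) (r : nat) (x : 'cV[R]_r) :
  ((ones R r)^T *m x) 0 0 = \sum_k x k 0.
Proof. by rewrite mxE; apply: eq_bigr => k _; rewrite !mxE mul1r. Qed.

Lemma trmx_unitv_mulmxE (R : nzRingType) (r : nat) (i : 'I_r) (x : 'cV[R]_r) :
  ((unitv R i)^T *m x) 0 0 = x i 0.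
Proof.
rewrite mxE (bigD1 i) //= big1 ?addr0; first by rewrite !mxE eqxx mul1r.
by move=> k /negbTE ki; rewrite !mxE ki mul0r.
Qed.

Lemma in_cone_dual_ge0 (R : numDomainType) (r n : nat) (H : 'M[R]_(r, n))
    (v x : 'cV[R]_r) :
  in_cone H v -> nonneg_mx (H^T *m x) -> 0 <= (v^T *m x) 0 0.
Proof.
move=> [y [y_ge0 <-]] Hx_ge0; rewrite trmx_mul -mulmxA mxE.
by apply: sumr_ge0 => k _; rewrite mxE mulr_ge0.
Qed.

Lemma NC_SSC_dual_le1 (R : numDomainType) (r n : nat) (H : 'M[R]_(r, n))
    (x : 'cV[R]_r) :
  NC_SSC H -> \sum_k x k 0 = 1 -> nonneg_mx (H^T *m x) ->
  forall i, x i 0 <= 1.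
Proof.
move=> ssc sum_x Hx_ge0 i.
have := in_cone_dual_ge0 (ssc i) Hx_ge0.
have -> : (ones R r - unitv R i)^T = (ones R r)^T - (unitv R i)^T.
  by apply/matrixP => a b; rewrite !mxE.
by rewrite mulmxBl mxE trmx_ones_mulmxE mxE trmx_unitv_mulmxE sum_x subr_ge0.
Qed.

Lemma sum_eq1_le1_lbound (R : numDomainType) (r : nat) (a : 'I_r -> R) :
  \sum_k a k = 1 -> (forall k, a k <= 1) -> forall i, 2 - r%:R <= a i.
Proof.
move=> sum_a a_le1 i; rewrite (bigD1 i) //= in sum_a.
have rest_le : \sum_(k | k != i) a k <= r.-1%:R.
  apply: le_trans (ler_sum _ (fun k _ => a_le1 k)) _.
  by rewrite sumr_const cardC1 card_ord.
have r_gt0 : (0 < r)%N by apply: leq_ltn_trans (ltn_ord i).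
have r_eq : r%:R = r.-1%:R + 1 :> R by rewrite natr1 prednK.
rewrite lerBlDr r_eq addrA (_ : 2 = 1 + 1) // lerD2r -[X in X <= _]sum_a.
by rewrite lerD2l.
Qed.

Theorem lemma2 (R : realFieldType) (r n : nat) (H : 'M[R]_(r, n)) :
  nonneg_mx H -> NC_SSC H ->
  forall x : 'cV[R]_r,
    (ones R r)^T *m x = 1 -> nonneg_mx (H^T *m x) ->
    forall i : 'I_r, 2 - r%:R <= x i 0 /\ x i 0 <= 1.
Proof.
(* The bounds hold without the nonnegativity of H. *)
move=> _ ssc x ones_x Hx_ge0 i.
have sum_x : \sum_k x k 0 = 1 by rewrite -trmx_ones_mulmxE ones_x mxE.
have x_le1 := NC_SSC_dual_le1 ssc sum_x Hx_ge0.
by split; [exact: sum_eq1_le1_lbound (fun k => x k 0) sum_x x_le1 i|].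
Qed.
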